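(* Let $L$ be an $r\times s$ $\boldsymbol\rho$-latin rectangle with $r,s\le n$ and $n>\min\{r,s\}$. Let $\Gamma$ be the simple bipartite graph with parts $R\cup C$ and $[k]$, where $R=\{x_1,\dots,x_r\}$ represents the rows and $C=\{y_1,\dots,y_s\}$ represents the columns of $L$. Here $x_i$ is adjacent to $\ell$ iff symbol $\ell$ does not occur in row $i$ of $L$, and $y_j$ is adjacent to $\ell$ iff $\ell$ does not occur in column $j$ of $L$. Then $L$ can be completed to an $n\times n$ $\boldsymbol\rho$-latin square if and only if $\Gamma$ has a subgraph $\Theta$ such that all of the following hold: - $\deg_\Theta(x_i)=n-s$ for all $i\in[r]$; - $\deg_\Theta(y_j)=n-r$ for all $j\in[s]$; - $\deg_\Theta(\ell)\le\rho_\ell-e_\ell$ for all $\ell\in[k]$; - for every $\ell\in[k]$, the number of edges of $\Theta$ between $\ell$ and $R$ is at least $\rho_\ell-e_\ell-n+r$; - for every $\ell\in[k]$, the number of edges of $\Theta$ between $\ell$ and $C$ is at least $\rho_\ell-e_\ell-n+s$.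
   Context: Let $n,k$ be positive integers. Let $\boldsymbol\rho=(\rho_1,\dots,\rho_k)$ be integers with $1\le\rho_\ell\le n\le k$ and $\sum_\ell\rho_\ell=n^2$. A $\boldsymbol\rho$-latin square of order $n$ is an $n\times n$ array with entries in $[k]$, each symbol at most once per row and per column, and symbol $\ell$ occurring exactly $\rho_\ell$ times. An $r\times s$ $\boldsymbol\rho$-latin rectangle is an $r\times s$ array with entries in $[k]$, each symbol at most once per row and per column, and symbol $\ell$ occurring at most $\rho_\ell$ times. Completing it means finding a $\boldsymbol\rho$-latin square of order $n$ whose top-left $r\times s$ subarray is $L$. $e_\ell$ is the number of occurrences of $\ell$ in $L$. *)

From mathcomp Require Import all_boot all_order all_algebra.
Set Implicit Arguments. Unset Strict Implicit. Unset Printing Implicit Defensive.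

(* Symbols [k] are represented by 'I_k (symbol l+1 of the paper is ordinal l).
   Arrays are matrices with entries in 'I_k. *)

Definition occ (k r s : nat) (A : 'M['I_k]_(r, s)) (l : 'I_k) : nat :=
  #|[set p : 'I_r * 'I_s | A p.1 p.2 == l]|.

Definition latin_array (k r s : nat) (A : 'M['I_k]_(r, s)) : Prop :=
  (forall i : 'I_r, injective (fun j : 'I_s => A i j)) /\
  (forall j : 'I_s, injective (fun i : 'I_r => A i j)).

Definition rho_latin_rectangle (k r s : nat) (rho : 'I_k -> nat)
    (A : 'M['I_k]_(r, s)) : Prop :=
  latin_array A /\ forall l : 'I_k, occ A l <= rho l.

Definition rho_latin_square (k n : nat) (rho : 'I_k -> nat)
    (A : 'M['I_k]_n) : Prop :=
  latin_array A /\ forall l : 'I_k, occ A l = rho l.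

Definition completable (k n r s : nat) (rho : 'I_k -> nat)
    (hr : r <= n) (hs : s <= n) (L : 'M['I_k]_(r, s)) : Prop :=
  exists M : 'M['I_k]_n, rho_latin_square rho M /\
    forall (i : 'I_r) (j : 'I_s), M (widen_ord hr i) (widen_ord hs j) = L i j.

Definition GammaR (k r s : nat) (L : 'M['I_k]_(r, s)) (i : 'I_r) (l : 'I_k) : bool :=
  [forall j : 'I_s, L i j != l].
Definition GammaC (k r s : nat) (L : 'M['I_k]_(r, s)) (j : 'I_s) (l : 'I_k) : bool :=
  [forall i : 'I_r, L i j != l].

(* A subgraph Theta of Gamma, given by its edge set split into the edges
   between R and [k] (ThR) and between C and [k] (ThC). *)
Definition subgraph_of_Gamma (k r s : nat) (L : 'M['I_k]_(r, s))
    (ThR : {set 'I_r * 'I_k}) (ThC : {set 'I_s * 'I_k}) : Prop :=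
  (forall i l, (i, l) \in ThR -> GammaR L i l) /\
  (forall j l, (j, l) \in ThC -> GammaC L j l).

Definition degR (r k : nat) (ThR : {set 'I_r * 'I_k}) (i : 'I_r) : nat :=
  #|[set l : 'I_k | (i, l) \in ThR]|.
Definition degC (s k : nat) (ThC : {set 'I_s * 'I_k}) (j : 'I_s) : nat :=
  #|[set l : 'I_k | (j, l) \in ThC]|.
Definition edgesR (r k : nat) (ThR : {set 'I_r * 'I_k}) (l : 'I_k) : nat :=
  #|[set i : 'I_r | (i, l) \in ThR]|.
Definition edgesC (s k : nat) (ThC : {set 'I_s * 'I_k}) (l : 'I_k) : nat :=
  #|[set j : 'I_s | (j, l) \in ThC]|.

(* Necessity: in a completion, join x_i to the symbols of row i to the right
   of L and y_j to the symbols of column j below L; counting each symbol in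
   the four blocks of the square gives the five conditions.
   Sufficiency: the bottom-right (n - r) x (n - s) block must receive
   f(l) = rho_l - e_l - deg_Theta(l) copies of l, and sum_l f(l) = (n - r)(n - s).
   Spread f over n - r fictitious rows of weight n - s and properly
   (n - s)-edge-colour the bipartite multigraph made of the rows of L with their
   Theta-edges and these fictitious rows (Koenig's theorem, from Hall's); colour
   class c fills column s + c next to L and fixes the set of symbols column s + c
   gets below L.  An (n - r)-edge-colouring of all n columns against the symbol
   sets they still need then yields the n - r missing rows. *)

From mathcomp Require Import all_boot all_order all_algebra.
From mathcomp Require Import zify.
Import Order.TTheory GRing.Theory Num.Theory.

Set Implicit Arguments. Unset Strict Implicit. Unset Printing Implicit Defensive.

Section Hall.
Variables (X Y : finType) (y0 : Y).
Implicit Types (adj : X -> Y -> bool) (A S T : {set X}).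

Definition nbhd adj S : {set Y} := [set y | [exists x in S, adj x y]].

Definition hall_condition adj A := forall S, S \subset A -> #|S| <= #|nbhd adj S|.

Definition matching_on adj A (f : X -> Y) :=
  {in A &, injective f} /\ {in A, forall x, adj x (f x)}.

Lemma mem_nbhd adj S x y : x \in S -> adj x y -> y \in nbhd adj S.
Proof. by move=> xS axy; rewrite inE; apply/existsP; exists x; rewrite xS. Qed.

Lemma nbhdS adj S T : S \subset T -> nbhd adj S \subset nbhd adj T.
Proof.
move=> ST; apply/subsetP=> y; rewrite !inE => /existsP [x /andP [xS axy]].
by apply/existsP; exists x; rewrite (subsetP ST) ?axy.
Qed.

Lemma nbhd_avoid adj S T :
  nbhd (fun x y => adj x y && (y \notin nbhd adj S)) T =
  nbhd adj (T :|: S) :\: nbhd adj S.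
Proof.
apply/setP=> y; rewrite in_setD [y \in nbhd _ T]inE [y \in nbhd _ (T :|: S)]inE.
apply/existsP/andP=> [[x /andP [xT /andP [axy ->]]]|[yS /existsP [x /andP]]].
  by split=> //; apply/existsP; exists x; rewrite inE xT axy.
rewrite inE => -[/orP [xT|xS] axy]; first by exists x; rewrite xT axy yS.
by case/negP: yS; apply: mem_nbhd xS axy.
Qed.

Section HallStep.
Variable N : nat.
Hypothesis IH : forall A adj, #|A| <= N -> hall_condition adj A ->
  exists f, matching_on adj A f.

(* A tight set S is matched inside its neighbourhood; the rest of A is
   matched avoiding it, and Hall's condition survives because S is tight. *)
Lemma hall_tight_step A adj S :
  #|A| <= N.+1 -> hall_condition adj A ->
  S \subset A -> S != set0 -> S != A -> #|nbhd adj S| <= #|S| ->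
  exists f, matching_on adj A f.
Proof.
move=> szA hallA SA Sn0 SnA tight.
have ltSA : #|S| < #|A| by apply: proper_card; rewrite properEneq SnA.
have [fS [injS adjS]] : exists f, matching_on adj S f.
  apply: IH; first by lia.
  by move=> T TS; apply: hallA; apply: subset_trans SA.
pose adj' x y := adj x y && (y \notin nbhd adj S).
have [fT [injT adjT]] : exists f, matching_on adj' (A :\: S) f.
  apply: IH.
    rewrite cardsD (setIidPr SA); move: Sn0; rewrite -card_gt0; lia.
  move=> T TAS.
  have TA : T \subset A := subset_trans TAS (subsetDl _ _).
  have TS0 : T :&: S = set0.
    apply/setP=> x; rewrite !inE; apply/negP=> /andP [/(subsetP TAS)].
    by rewrite inE => /andP [/negP].
  rewrite nbhd_avoid cardsD (setIidPr (nbhdS _ (subsetUr T S))).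
  have := hallA (T :|: S); rewrite subUset TA SA cardsU.
  by rewrite TS0 cards0 => /(_ isT); lia.
exists (fun x => if x \in S then fS x else fT x); split.
  have sep x x' : x \in S -> x' \in A :\: S -> fS x != fT x'.
    move=> xS x'AS; apply/eqP=> e; case/andP: (adjT _ x'AS) => _.
    by rewrite -e (mem_nbhd xS (adjS _ xS)).
  move=> x x' xA x'A /=; case: ifP => xS; case: ifP => x'S.
  - exact: injS.
  - by move=> e; move: (sep x x'); rewrite e eqxx inE x'S xS x'A => /(_ isT isT).
  - by move=> e; move: (sep x' x); rewrite e eqxx inE x'S xS xA => /(_ isT isT).
  - by apply: injT; rewrite inE ?xS ?x'S.
move=> x xA; case: ifP => xS; first exact: adjS.
have xAS : x \in A :\: S by rewrite inE xS.
by case/andP: (adjT x xAS).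
Qed.

(* Without tight proper subsets, any edge x0 -- y at x0 \in A can be used:
   deleting y costs every proper subset at most one neighbour. *)
Lemma hall_surplus_step A adj :
  #|A| <= N.+1 -> hall_condition adj A ->
  (forall S, S \subset A -> S != set0 -> S != A -> #|S| < #|nbhd adj S|) ->
  exists f, matching_on adj A f.
Proof.
move=> szA hallA surplus.
have [A0|[x0 x0A]] := set_0Vmem A.
  by exists (fun _ => y0); split=> x; rewrite A0 inE.
have : 0 < #|nbhd adj [set x0]|.
  by apply: leq_trans (hallA _ _); rewrite ?cards1 // sub1set.
rewrite card_gt0 => /set0Pn [y]; rewrite inE => /existsP [z /andP [/set1P -> ax0y]].
pose adj' x y' := adj x y' && (y' != y).
have [f [injf adjf]] : exists f, matching_on adj' (A :\ x0) f.
  apply: IH; first by move: szA; rewrite (cardsD1 x0 A) x0A; lia.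
  move=> T TA.
  have [->|[t tT]] := set_0Vmem T; first by rewrite cards0.
  have TsA : T \subset A := subset_trans TA (subsetDl _ _).
  have TnA : T != A.
    by apply: contraTneq TA => ->; apply/subsetPn; exists x0; rewrite ?inE ?eqxx.
  have Tn0 : T != set0 by apply/set0Pn; exists t.
  have lt := surplus T TsA Tn0 TnA.
  have sub : nbhd adj T :\ y \subset nbhd adj' T.
    apply/subsetP=> y'; rewrite !inE => /andP [ny /existsP [x /andP [xT axy]]].
    by apply/existsP; exists x; rewrite xT /adj' axy ny.
  move: (subset_leq_card sub) (cardsD1 y (nbhd adj T)).
  by case: (y \in nbhd adj T); lia.
have inAx0 x : x \in A -> x <> x0 -> x \in A :\ x0.
  by move=> xA /eqP nx; rewrite !inE xA nx.
exists (fun x => if x == x0 then y else f x); split.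
  have ne x : x \in A :\ x0 -> f x != y by move/adjf/andP=> [].
  move=> x x' xA x'A /=; case: eqP => [->|nx]; case: eqP => [->|nx'] //.
  - by move=> e; move: (ne x' (inAx0 _ x'A nx')); rewrite -e eqxx.
  - by move=> e; move: (ne x (inAx0 _ xA nx)); rewrite e eqxx.
  - by apply: injf; apply: inAx0.
move=> x xA; case: eqP => [->//|nx].
by case/andP: (adjf x (inAx0 _ xA nx)).
Qed.

End HallStep.

Theorem hall_marriage A adj : hall_condition adj A -> exists f, matching_on adj A f.
Proof.
move: {2}#|A| (leqnn #|A|) => N; elim: N A adj => [|N IH] A adj.
  rewrite leqn0 cards_eq0 => /eqP -> _.
  by exists (fun _ => y0); split=> x; rewrite inE.
move=> szA hallA.
have [/existsP [S /and4P [SA Sn0 SnA tight]]|] :=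
  boolP [exists S : {set X}, [&& S \subset A, S != set0, S != A & #|nbhd adj S| <= #|S|]].
  exact: (hall_tight_step IH szA hallA SA Sn0 SnA tight).
rewrite negb_exists => /forallP noTight.
apply: (hall_surplus_step IH szA hallA) => S SA Sn0 SnA.
by move: (noTight S); rewrite SA Sn0 SnA /= ltnNge.
Qed.

End Hall.

Lemma sum_eq_mul (T : finType) (a : T) (c : T -> nat) : \sum_b (a == b) * c b = c a.
Proof.
by rewrite (bigD1 a) //= eqxx mul1n big1 ?addn0 // => b /negbTE; rewrite eq_sym => ->.
Qed.

Lemma sum_eq1 (T : finType) (a : T) : \sum_b (a == b) = 1.
Proof. by rewrite -(sum_eq_mul a (fun=> 1)); apply: eq_bigr => b _; rewrite muln1. Qed.

Definition ord_cons (T : Type) (D : nat) (a : T) (F : 'I_D -> T) (t : 'I_D.+1) : T :=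
  if unlift ord0 t is Some t' then F t' else a.

Lemma sum_ord_cons (T : Type) (D : nat) (a : T) (F : 'I_D -> T) (G : T -> nat) :
  \sum_(t < D.+1) G (ord_cons a F t) = G a + \sum_(t < D) G (F t).
Proof.
rewrite big_ord_recl /ord_cons unlift_none; congr (_ + _).
by apply: eq_bigr => t _; rewrite liftK.
Qed.

Section RegularDecomposition.
Variables (X Y : finType) (y0 : Y).
Implicit Types (D : nat) (m : X -> Y -> nat).

Lemma regular_matching D m :
  (forall x, \sum_y m x y = D.+1) -> (forall y, \sum_x m x y = D.+1) ->
  exists f : X -> Y, injective f /\ forall x, 0 < m x (f x).
Proof.
move=> rows cols; pose adj x y := 0 < m x y.
have [f [injf adjf]] : exists f, matching_on adj [set: X] f.
  apply: hall_marriage => // S _; rewrite -(leq_pmul2l (ltn0Sn D)).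
  have -> : D.+1 * #|S| = \sum_(x in S) \sum_(y in nbhd adj S) m x y.
    rewrite mulnC -sum_nat_const; apply: eq_bigr => x xS.
    rewrite -(rows x) [RHS]big_mkcond; apply: eq_bigr => y _.
    case: ifP => // /negbT; apply: contraNeq; rewrite -lt0n.
    exact: mem_nbhd.
  rewrite exchange_big mulnC -sum_nat_const; apply: leq_sum => y _.
  by rewrite -(cols y) [X in _ <= X](bigID (mem S)) leq_addr.
by exists f; split=> [x x'|x]; [apply: injf | apply: adjf]; rewrite inE.
Qed.

Lemma regular_decomposition D m : #|X| = #|Y| ->
  (forall x, \sum_y m x y = D) -> (forall y, \sum_x m x y = D) ->
  exists F : 'I_D -> X -> Y, (forall t, injective (F t)) /\
    forall x y, m x y = \sum_(t < D) (F t x == y).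
Proof.
move=> cardXY; elim: D m => [|D IH] m rows cols.
  exists (fun t : 'I_0 => False_rect _ (notF (ltn_ord t))); split=> [[]|x y] //.
  by rewrite big_ord0; apply/eqP; rewrite -leqn0 -(rows x) (bigD1 y) ?leq_addr.
have [f [injf posf]] := regular_matching rows cols.
have [g fK gK] : bijective f by apply: inj_card_bij; rewrite ?cardXY.
have fm x y : (f x == y) <= m x y by case: eqP => [<-|]; rewrite ?posf.
have [F [injF decF]] : exists F : 'I_D -> X -> Y, (forall t, injective (F t)) /\
    forall x y, m x y - (f x == y) = \sum_(t < D) (F t x == y).
  apply: IH => [x|y]; rewrite sumnB => [|z _]; rewrite ?fm //.
    by rewrite rows sum_eq1 subn1.
  have -> : \sum_x (f x == y) = \sum_x (g y == x).
    by apply: eq_bigr => x _; congr nat_of_bool; apply/eqP/eqP=> <-; rewrite ?fK ?gK.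
  by rewrite cols sum_eq1 subn1.
exists (ord_cons f F); split=> [t x x'|x y].
  by rewrite /ord_cons; case: (unlift _ _) => [t'|]; [apply: injF | apply: injf].
by rewrite (sum_ord_cons _ _ (fun h => h x == y)) -decF subnKC.
Qed.

End RegularDecomposition.

(* Embed m into a D-regular multigraph between X + Y and Y + X: a copy of m
   on X x Y, its transpose on Y x X, and D minus its degree on the edge
   joining the two copies of each y. *)
Lemma edge_colouring (X Y : finType) (y0 : Y) (D : nat) (m : X -> Y -> nat) :
  (forall x, \sum_y m x y = D) -> (forall y, \sum_x m x y <= D) ->
  exists F : 'I_D -> X -> Y, (forall t, injective (F t)) /\
    forall x y, m x y = \sum_(t < D) (F t x == y).
Proof.
move=> rows cols.
pose M (u : X + Y) (v : Y + X) : nat :=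
  match u, v with
  | inl x, inl y => m x y
  | inl _, inr _ => 0
  | inr y', inl y => (y' == y) * (D - \sum_x m x y)
  | inr y, inr x => m x y
  end.
have cardM : #|{: X + Y}| = #|{: Y + X}| by rewrite !card_sum addnC.
have rowsM u : \sum_v M u v = D.
  case: u => [x|y]; rewrite big_sumType /=; first by rewrite rows big1 ?addn0.
  by rewrite sum_eq_mul subnK ?cols.
have colsM v : \sum_u M u v = D.
  case: v => [y|x]; rewrite big_sumType /=; last by rewrite big1 ?rows.
  rewrite (eq_bigr (fun y' => (y == y') * (D - \sum_x m x y))) => [|y' _].
    by rewrite sum_eq_mul subnKC ?cols.
  by rewrite eq_sym.
have [F [injF decF]] := regular_decomposition (inl y0) cardM rowsM colsM.
have inlF t x : exists y, F t (inl x) = inl y.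
  case e: (F t (inl x)) => [y|x']; first by exists y.
  have := decF (inl x) (inr x'); rewrite (bigD1 t) //= e eqxx; lia.
exists (fun t x => if F t (inl x) is inl y then y else y0); split.
  move=> t x x'; have [y ex] := inlF t x; have [y' ex'] := inlF t x'.
  rewrite ex ex' => eyy'.
  by have /injF[] : F t (inl x) = F t (inl x') by rewrite ex ex' eyy'.
move=> x y; rewrite -[m x y]/(M (inl x) (inl y)) decF.
by apply: eq_bigr => t _; have [y' ->] := inlF t x.
Qed.

Lemma leq_sum_part (K : finType) (f : K -> nat) (a : nat) : a <= \sum_l f l ->
  exists g : K -> nat, (forall l, g l <= f l) /\ \sum_l g l = a.
Proof.
elim: a => [|a IH] le_a_f; first by exists (fun _ => 0); rewrite big1.
have [g [le_g_f sum_g]] := IH (ltnW le_a_f).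
have [l lt_gl] : exists l, g l < f l.
  apply/existsP; apply: contraTT le_a_f; rewrite negb_exists -leqNgt => /forallP ge.
  by rewrite -sum_g; apply: leq_sum => l _; rewrite leqNgt ge.
exists (fun l' => g l' + (l' == l)); split.
  by move=> l'; case: eqP => [->|_]; rewrite ?addn1 ?addn0.
by rewrite big_split /= sum_g (bigD1 l) //= eqxx big1 ?addn0 ?addn1 // => l' /negbTE ->.
Qed.

Lemma matrix_with_margins (K : finType) (b a : nat) (f : K -> nat) :
  \sum_l f l = b * a ->
  exists mu : 'I_b -> K -> nat,
    (forall t, \sum_l mu t l = a) /\ (forall l, \sum_(t < b) mu t l = f l).
Proof.
elim: b f => [|b IH] f sum_f.
  exists (fun t : 'I_0 => False_rect _ (notF (ltn_ord t))); split=> [[]|l] //.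
  rewrite big_ord0; apply/esym/eqP.
  by rewrite -leqn0 -(mul0n a) -sum_f (bigD1 l) ?leq_addr.
have [g [le_g_f sum_g]] : exists g : K -> nat, (forall l, g l <= f l) /\ \sum_l g l = a.
  by apply: leq_sum_part; rewrite sum_f mulSn leq_addr.
have [mu [rows cols]] : exists mu : 'I_b -> K -> nat,
    (forall t, \sum_l mu t l = a) /\ (forall l, \sum_(t < b) mu t l = f l - g l).
  by apply: IH; rewrite sumnB // sum_f sum_g mulSn addKn.
exists (ord_cons g mu); split=> [t|l].
  by rewrite /ord_cons; case: (unlift _ _).
by rewrite (sum_ord_cons _ _ (fun h => h l)) cols subnKC.
Qed.

Lemma card_sum_bool (T : finType) (A : {pred T}) : #|A| = \sum_x (x \in A).
Proof. by rewrite -sum1_card big_mkcond; apply: eq_bigr => x _; case: (x \in A). Qed.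

Section Counting.
Variables (T : finType) (K : eqType) (g : T -> K).

Lemma count_inj l : injective g -> \sum_t (g t == l) = [exists t, g t == l].
Proof.
move=> injg; case: existsP => [[t /eqP gt]|none]; last first.
  rewrite big1 // => t _; apply/eqP; rewrite eqb0.
  by apply/negP=> e; apply: none; exists t.
rewrite (bigD1 t) //= gt eqxx big1 // => t' nt'; apply/eqP; rewrite eqb0.
by apply: contra nt' => /eqP; rewrite -gt => /injg ->.
Qed.

Lemma count_inj_le1 l : injective g -> \sum_t (g t == l) <= 1.
Proof. by move=> injg; rewrite count_inj //; case: existsP. Qed.

Lemma count_le1_inj : (forall l, \sum_t (g t == l) <= 1) -> injective g.
Proof.
move=> le1 t t' e; apply/eqP; apply: contraT => nt.
by have := le1 (g t); rewrite (bigD1 t) //= (bigD1 t') 1?eq_sym //= e eqxx.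
Qed.

End Counting.

Lemma occ_sum (k r s : nat) (A : 'M['I_k]_(r, s)) l :
  occ A l = \sum_i \sum_j (A i j == l).
Proof.
by rewrite /occ cardsE card_sum_bool -(pair_bigA _ (fun i j => (A i j == l) : nat)).
Qed.

Lemma sum_occ (k r s : nat) (A : 'M['I_k]_(r, s)) : \sum_l occ A l = r * s.
Proof.
rewrite (eq_bigr _ (fun l _ => occ_sum A l)) exchange_big /=.
rewrite (eq_bigr (fun _ => s)) ?sum_nat_const ?card_ord // => i _.
rewrite exchange_big /= (eq_bigr (fun _ => 1)) ?sum_nat_const ?card_ord ?muln1 //.
by move=> j _; rewrite sum_eq1.
Qed.

Lemma degR_sum (r k : nat) (ThR : {set 'I_r * 'I_k}) i :
  degR ThR i = \sum_l ((i, l) \in ThR).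
Proof. by rewrite /degR cardsE card_sum_bool. Qed.

Lemma degC_sum (s k : nat) (ThC : {set 'I_s * 'I_k}) j :
  degC ThC j = \sum_l ((j, l) \in ThC).
Proof. by rewrite /degC cardsE card_sum_bool. Qed.

Lemma edgesR_sum (r k : nat) (ThR : {set 'I_r * 'I_k}) l :
  edgesR ThR l = \sum_i ((i, l) \in ThR).
Proof. by rewrite /edgesR cardsE card_sum_bool. Qed.

Lemma edgesC_sum (s k : nat) (ThC : {set 'I_s * 'I_k}) l :
  edgesC ThC l = \sum_j ((j, l) \in ThC).
Proof. by rewrite /edgesC cardsE card_sum_bool. Qed.

Section OrdSplit.
Variables (n m : nat) (h : m <= n).

Definition ord_split (i : 'I_n) : 'I_m + 'I_(n - m) :=
  split (cast_ord (esym (subnKC h)) i).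
Definition ord_unsplit (u : 'I_m + 'I_(n - m)) : 'I_n :=
  cast_ord (subnKC h) (unsplit u).

Lemma ord_splitK : cancel ord_split ord_unsplit.
Proof. by move=> i; rewrite /ord_split /ord_unsplit splitK; apply: val_inj. Qed.

Lemma ord_unsplitK : cancel ord_unsplit ord_split.
Proof.
move=> u; rewrite /ord_split /ord_unsplit.
by rewrite (_ : cast_ord _ _ = unsplit u) ?unsplitK //; apply: val_inj.
Qed.

Lemma ord_split_widen (i : 'I_m) : ord_split (widen_ord h i) = inl i.
Proof.
by rewrite (_ : widen_ord h i = ord_unsplit (inl i)) ?ord_unsplitK //; apply: val_inj.
Qed.

Lemma big_ord_split (F : 'I_n -> nat) : \sum_i F i = \sum_u F (ord_unsplit u).
Proof.
rewrite (reindex ord_unsplit) //.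
by exists ord_split => x _; rewrite ?ord_unsplitK ?ord_splitK.
Qed.

End OrdSplit.

Section BlockSquare.
Variables (k n r s : nat) (hr : r <= n) (hs : s <= n).
Variable F : 'I_r + 'I_(n - r) -> 'I_s + 'I_(n - s) -> 'I_k.

Definition block_square : 'M['I_k]_n :=
  \matrix_(i, j) F (ord_split hr i) (ord_split hs j).

Lemma occ_block_square l : occ block_square l = \sum_u \sum_v (F u v == l).
Proof.
rewrite occ_sum (big_ord_split hr); apply: eq_bigr => u _.
by rewrite (big_ord_split hs); apply: eq_bigr => v _; rewrite mxE !ord_unsplitK.
Qed.

Lemma latin_block_square : (forall u, injective (F u)) ->
  (forall v, injective (F^~ v)) -> latin_array block_square.
Proof.
move=> rowsF colsF; split=> [i j j'|j i i']; rewrite !mxE.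
  by move/rowsF/(can_inj (ord_splitK hs)).
by move/(colsF (ord_split hs j))/(can_inj (ord_splitK hr)).
Qed.

Lemma block_square_widen (i : 'I_r) (j : 'I_s) :
  block_square (widen_ord hr i) (widen_ord hs j) = F (inl i) (inl j).
Proof. by rewrite mxE !ord_split_widen. Qed.

End BlockSquare.

Lemma sum_blocks (I1 I2 J1 J2 : finType) (G : I1 + I2 -> J1 + J2 -> nat) :
  \sum_u \sum_v G u v =
  \sum_i \sum_j G (inl i) (inl j) + \sum_i \sum_c G (inl i) (inr c) +
  \sum_t \sum_j G (inr t) (inl j) + \sum_t \sum_c G (inr t) (inr c).
Proof.
rewrite big_sumType /=.
under eq_bigr do rewrite big_sumType.
under [X in _ + X]eq_bigr do rewrite big_sumType.
by rewrite !big_split /= addnA.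
Qed.

(* The conditions of the theorem, with the subtractions moved across so that
   they are stated in nat. *)
Definition admissible_subgraph (k n r s : nat) (rho : 'I_k -> nat)
    (L : 'M['I_k]_(r, s)) (ThR : {set 'I_r * 'I_k}) (ThC : {set 'I_s * 'I_k}) :=
  subgraph_of_Gamma L ThR ThC /\
  [/\ forall i, degR ThR i = n - s, forall j, degC ThC j = n - r,
      forall l, edgesR ThR l + edgesC ThC l + occ L l <= rho l,
      forall l, rho l + r <= occ L l + edgesR ThR l + n &
      forall l, rho l + s <= occ L l + edgesC ThC l + n].

Section Necessity.
Variables (k n r s : nat) (hr : r <= n) (hs : s <= n) (rho : 'I_k -> nat).
Variables (L : 'M['I_k]_(r, s)) (M : 'M['I_k]_n).
Hypothesis latinM : rho_latin_square rho M.
Hypothesis extML : forall i j, M (widen_ord hr i) (widen_ord hs j) = L i j.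

Let F u v := M (ord_unsplit hr u) (ord_unsplit hs v).

Let F_topleft i j : F (inl i) (inl j) = L i j.
Proof. by rewrite /F -extML; congr (M _ _); apply: val_inj. Qed.

Let F_rowI u : injective (F u).
Proof. by move=> v v' /latinM.1.1 /(can_inj (ord_unsplitK hs)). Qed.

Let F_colI v : injective (F^~ v).
Proof. by move=> u u' /latinM.1.2 /(can_inj (ord_unsplitK hr)). Qed.

Let occ_topright l := \sum_i \sum_c (F (inl i) (inr c) == l).
Let occ_bottomleft l := \sum_t \sum_j (F (inr t) (inl j) == l).
Let occ_bottomright l := \sum_t \sum_c (F (inr t) (inr c) == l).

Let rho_blocks l :
  rho l = occ L l + occ_topright l + occ_bottomleft l + occ_bottomright l.
Proof.
rewrite -latinM.2 (_ : M = block_square hr hs F); last first.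
  by apply/matrixP=> i j; rewrite mxE /F !ord_splitK.
rewrite occ_block_square sum_blocks occ_sum.
by congr (_ + _ + _ + _); apply: eq_bigr => i _; apply: eq_bigr => j _; rewrite F_topleft.
Qed.

Let bottom_count l : occ_bottomleft l + occ_bottomright l <= n - r.
Proof.
rewrite -big_split /=; apply: (@leq_trans (\sum_(t < n - r) 1)).
  apply: leq_sum => t _.
  by have := count_inj_le1 l (@F_rowI (inr t)); rewrite big_sumType.
by rewrite sum1_card card_ord.
Qed.

Let right_count l : occ_topright l + occ_bottomright l <= n - s.
Proof.
rewrite /occ_topright /occ_bottomright exchange_big [X in _ + X]exchange_big.
rewrite -big_split /=.
apply: (@leq_trans (\sum_(c < n - s) 1)).
  apply: leq_sum => c _.
  by have := count_inj_le1 l (@F_colI (inr c)); rewrite big_sumType.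
by rewrite sum1_card card_ord.
Qed.

Let ThR := [set p : 'I_r * 'I_k | [exists c, F (inl p.1) (inr c) == p.2]].
Let ThC := [set p : 'I_s * 'I_k | [exists t, F (inr t) (inl p.1) == p.2]].

Let edgesR_topright l : edgesR ThR l = occ_topright l.
Proof.
by rewrite edgesR_sum; apply: eq_bigr => i _; rewrite inE count_inj // => c c' /F_rowI [].
Qed.

Let edgesC_bottomleft l : edgesC ThC l = occ_bottomleft l.
Proof.
rewrite edgesC_sum /occ_bottomleft exchange_big; apply: eq_bigr => j _.
by rewrite inE count_inj // => t t' /F_colI [].
Qed.

Lemma completable_admissible : exists ThR ThC, admissible_subgraph n rho L ThR ThC.
Proof.
exists ThR, ThC; split.
  split=> [i l|j l]; rewrite inE /= => /existsP [x /eqP <-]; apply/forallP => y.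
    by rewrite -F_topleft; apply/eqP => /F_rowI.
  by rewrite -F_topleft; apply/eqP => /F_colI.
split=> [i|j|l|l|l].
- rewrite /degR (_ : [set l | _] = [set F (inl i) (inr c) | c : 'I_(n - s)]).
    by rewrite card_imset ?card_ord // => c c' /F_rowI [].
  apply/setP=> l; rewrite !inE /=.
  by apply/existsP/imsetP=> [[c /eqP <-]|[c _ ->]]; exists c.
- rewrite /degC (_ : [set l | _] = [set F (inr t) (inl j) | t : 'I_(n - r)]).
    by rewrite card_imset ?card_ord // => t t' /F_colI [].
  apply/setP=> l; rewrite !inE /=.
  by apply/existsP/imsetP=> [[t /eqP <-]|[t _ ->]]; exists t.
- by rewrite edgesR_topright edgesC_bottomleft rho_blocks; lia.
- by rewrite edgesR_topright rho_blocks; move: (bottom_count l) (subnKC hr); lia.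
- by rewrite edgesC_bottomleft rho_blocks; move: (right_count l) (subnKC hs); lia.
Qed.

End Necessity.

Section Sufficiency.
Variables (k n r s : nat) (hr : r <= n) (hs : s <= n) (rho : 'I_k -> nat).
Variables (L : 'M['I_k]_(r, s)) (ThR : {set 'I_r * 'I_k}) (ThC : {set 'I_s * 'I_k}).
Variable l0 : 'I_k.
Hypothesis latinL : latin_array L.
Hypothesis sum_rho : \sum_l rho l = n ^ 2.
Hypothesis admissible : admissible_subgraph n rho L ThR ThC.

Let deficit l := rho l - occ L l - edgesR ThR l - edgesC ThC l.

Let deficitE l : deficit l + occ L l + edgesR ThR l + edgesC ThC l = rho l.
Proof.
by have [_ [_ _ le_rho _ _]] := admissible; move: (le_rho l); rewrite /deficit; lia.
Qed.

Let sum_deficit : \sum_l deficit l = (n - r) * (n - s).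
Proof.
have [_ [degRE degCE _ _ _]] := admissible.
have sum_edgesR : \sum_l edgesR ThR l = r * (n - s).
  rewrite (eq_bigr _ (fun l _ => edgesR_sum ThR l)) exchange_big /=.
  rewrite (eq_bigr (fun _ => n - s)) ?sum_nat_const ?card_ord // => i _.
  by rewrite -degR_sum.
have sum_edgesC : \sum_l edgesC ThC l = s * (n - r).
  rewrite (eq_bigr _ (fun l _ => edgesC_sum ThC l)) exchange_big /=.
  rewrite (eq_bigr (fun _ => n - r)) ?sum_nat_const ?card_ord // => j _.
  by rewrite -degC_sum.
have := sum_rho; rewrite -(eq_bigr _ (fun l _ => deficitE l)) !big_split /=.
rewrite sum_occ sum_edgesR sum_edgesC.
move: (subnKC hr) (subnKC hs); move: (n - r) (n - s) => a b ea eb.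
have -> : n ^ 2 = (r + a) * (s + b) by rewrite ea eb mulnn.
nia.
Qed.

Let right_columns :
  exists (R : 'I_(n - s) -> 'I_r -> 'I_k) (MC : 'I_(n - s) -> {set 'I_k}),
  [/\ forall c, injective (R c), forall c i, R c i \notin MC c,
      forall c, #|MC c| = n - r,
      forall i l, \sum_c (R c i == l) = ((i, l) \in ThR) &
      forall l, \sum_c (l \in MC c) = deficit l].
Proof.
have [_ [degRE _ _ _ le_C]] := admissible.
(* Spread the deficit over n - r fictitious rows of weight n - s; of the
   colouring below only the set of symbols colour c gives them will matter. *)
have [mu [mu_rows mu_cols]] := matrix_with_margins sum_deficit.
pose m1 u l := match u with inl i => ((i, l) \in ThR) : nat | inr t => mu t l end.
have [S [injS decS]] : exists S : 'I_(n - s) -> 'I_r + 'I_(n - r) -> 'I_k,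
    (forall c, injective (S c)) /\ forall u l, m1 u l = \sum_c (S c u == l).
  apply: (@edge_colouring _ _ l0 (n - s) m1) => [[i|t]|l] /=; first by rewrite -degR_sum.
    exact: mu_rows.
  rewrite big_sumType /= -edgesR_sum mu_cols.
  by move: (le_C l) (deficitE l) (subnKC hs); lia.
exists (fun c i => S c (inl i)), (fun c => [set S c (inr t) | t : 'I_(n - r)]).
split=> [c i i' /injS [] //|c i|c|i l|l].
- by apply/imsetP=> -[t _ /injS].
- by rewrite card_imset ?card_ord // => t t' /injS [].
- by rewrite -[in RHS]/(m1 (inl i) l) decS.
rewrite -mu_cols (eq_bigr _ (fun t _ => decS (inr t) l)) exchange_big /=.
apply: eq_bigr => c _; rewrite count_inj; last by move=> t t' /injS [].
congr nat_of_bool; by apply/imsetP/existsP=> [[t _ ->]|[t /eqP <-]]; exists t.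
Qed.

Let bottom_rows (MC : 'I_(n - s) -> {set 'I_k}) :
  (forall c, #|MC c| = n - r) -> (forall l, \sum_c (l \in MC c) = deficit l) ->
  exists B : 'I_(n - r) -> 'I_s + 'I_(n - s) -> 'I_k,
    [/\ forall t, injective (B t),
        forall j l, \sum_t (B t (inl j) == l) = ((j, l) \in ThC) &
        forall c l, \sum_t (B t (inr c) == l) = (l \in MC c)].
Proof.
move=> cardMC MC_deficit; have [_ [_ degCE _ le_R _]] := admissible.
pose m2 v l :=
  match v with inl j => ((j, l) \in ThC) : nat | inr c => (l \in MC c) : nat end.
have [B [injB decB]] : exists B : 'I_(n - r) -> 'I_s + 'I_(n - s) -> 'I_k,
    (forall t, injective (B t)) /\ forall v l, m2 v l = \sum_t (B t v == l).
  apply: (@edge_colouring _ _ l0 (n - r) m2) => [[j|c]|l] /=.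
  - by rewrite -degC_sum.
  - by rewrite -card_sum_bool.
  rewrite big_sumType /= -edgesC_sum MC_deficit.
  by move: (le_R l) (deficitE l) (subnKC hr); lia.
by exists B; split=> // [j|c] l; rewrite -decB.
Qed.

Lemma admissible_completable : completable rho hr hs L.
Proof.
have [R [MC [injR RnMC cardMC R_ThR MC_deficit]]] := right_columns.
have [B [injB B_ThC B_MC]] := bottom_rows cardMC MC_deficit.
have [[ThR_Gamma ThC_Gamma] _] := admissible.
pose F u v := match u, v with
  | inl i, inl j => L i j | inl i, inr c => R c i | inr t, _ => B t v end.
have rowF u l : \sum_v (F u v == l) <= 1.
  case: u => [i|t]; last exact: count_inj_le1 (injB t).
  rewrite big_sumType /= R_ThR count_inj; last exact: latinL.1.
  case: existsP => [[j /eqP Lij]|_]; last by case: (_ \in _).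
  rewrite (negbTE (_ : (i, l) \notin ThR)) //.
  by apply/negP=> /ThR_Gamma /forallP /(_ j); rewrite Lij eqxx.
have colF v l : \sum_u (F u v == l) <= 1.
  case: v => [j|c]; rewrite big_sumType /=.
    rewrite B_ThC count_inj; last exact: latinL.2.
    case: existsP => [[i /eqP Lij]|_]; last by case: (_ \in _).
    rewrite (negbTE (_ : (j, l) \notin ThC)) //.
    by apply/negP=> /ThC_Gamma /forallP /(_ i); rewrite Lij eqxx.
  rewrite B_MC count_inj //; case: existsP => [[i /eqP <-]|_]; last by case: (_ \in _).
  by rewrite (negbTE (RnMC c i)).
exists (block_square hr hs F); split; last by move=> i j; rewrite block_square_widen.
split.
  apply: latin_block_square => [u|v]; apply: count_le1_inj; [exact: rowF|exact: colF].
move=> l; rewrite occ_block_square sum_blocks /= -(deficitE l) occ_sum.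
have -> : \sum_i \sum_c (R c i == l) = edgesR ThR l.
  by rewrite edgesR_sum; apply: eq_bigr => i _; exact: R_ThR.
have -> : \sum_t \sum_j (B t (inl j) == l) = edgesC ThC l.
  by rewrite edgesC_sum exchange_big; apply: eq_bigr => j _; exact: B_ThC.
have -> : \sum_t \sum_c (B t (inr c) == l) = deficit l.
  by rewrite -MC_deficit exchange_big; apply: eq_bigr => c _; exact: B_MC.
by rewrite addnC !addnA.
Qed.

End Sufficiency.

Local Open Scope ring_scope.

Theorem mainTheorem3 (n k : nat) (rho : 'I_k -> nat)
    (hrho1 : forall l : 'I_k, (1 <= rho l <= n)%N)
    (hnk : (n <= k)%N)
    (hsum : (\sum_(l < k) rho l)%N = (n ^ 2)%N)
    (r s : nat) (hr : (r <= n)%N) (hs : (s <= n)%N)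
    (hmin : (minn r s < n)%N)
    (L : 'M['I_k]_(r, s)) (hL : rho_latin_rectangle rho L) :
  completable rho hr hs L <->
  exists (ThR : {set 'I_r * 'I_k}) (ThC : {set 'I_s * 'I_k}),
    subgraph_of_Gamma L ThR ThC /\
    [/\
        (forall i : 'I_r, degR ThR i = (n - s)%N),
        (forall j : 'I_s, degC ThC j = (n - r)%N),
        (forall l : 'I_k,
           ((edgesR ThR l + edgesC ThC l)%:Z <= (rho l)%:Z - (occ L l)%:Z)),
        (forall l : 'I_k,
           ((rho l)%:Z - (occ L l)%:Z - n%:Z + r%:Z <= (edgesR ThR l)%:Z)) &
        (forall l : 'I_k,
           ((rho l)%:Z - (occ L l)%:Z - n%:Z + s%:Z <= (edgesC ThC l)%:Z))].
Proof.
split=> [[M [latinM extML]]|[ThR [ThC [sub [dR dC e3 e4 e5]]]]].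
  have [ThR [ThC [sub [dR dC e3 e4 e5]]]] := completable_admissible latinM extML.
  exists ThR, ThC; split=> //; split=> [//|//|l|l|l].
  - by move: (e3 l); lia.
  - by move: (e4 l); lia.
  - by move: (e5 l); lia.
have k_gt0 : (0 < k)%N := leq_trans (leq_ltn_trans (leq0n _) hmin) hnk.
apply: (admissible_completable hr hs (ThR := ThR) (ThC := ThC) (Ordinal k_gt0)).
- exact: hL.1.
- exact: hsum.
split=> //; split=> [//|//|l|l|l].
- by move: (e3 l); lia.
- by move: (e4 l); lia.
- by move: (e5 l); lia.
Qed.
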